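(* Consider $P(\omega)$ with the Michael topology. If $\mathfrak{b}=\aleph_1$, then there is a subspace $X\subseteq P(\omega)$ which is a $\gamma$-space and is also a Michael space, i.e., $X$ is Lindelöf and $X\times\mathbb{P}$ is not Lindelöf, where $\mathbb{P}$ is the space of irrational numbers.
   Context: $P(\omega)$ is identified with the Cantor space $2^\omega$ via characteristic functions, giving the Cantor topology. The Michael topology on $P(\omega)$ is the finer topology obtained by additionally declaring every infinite subset of $\omega$ to be an isolated point. For $f,g\in\omega^\omega$, $f\le^* g$ means $f(n)\le g(n)$ for all but finitely many $n$; $\mathfrak{b}$ is the minimal cardinality of a subset of $\omega^\omega$ that is unbounded with respect to $\le^*$. An open cover $\mathcal{U}$ of a space $X$ is an $\omega$-cover if $X\notin\mathcal{U}$ and every finite subset of $X$ is included in some member of $\mathcal{U}$. A point-cofinite cover is an infinite open cover such that each point belongs to all but finitely many of its members. $X$ is a $\gamma$-space if every $\omega$-cover of $X$ includes a point-cofinite cover. *)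

From HB Require Import structures.
From mathcomp Require Import all_boot all_order all_algebra.
From mathcomp Require Import all_classical all_reals all_analysis.
Set Implicit Arguments. Unset Strict Implicit. Unset Printing Implicit Defensive.
Import Order.TTheory GRing.Theory Num.Theory.
Import numFieldNormedType.Exports.
Local Open Scope classical_set_scope.

(* P(omega) identified with characteristic functions nat -> bool. *)
Definition Pw := nat -> bool.

Definition infinite_pt (x : Pw) : Prop := ~ finite_set [set n | x n].

Definition cantor_open (U : set Pw) : Prop :=
  forall x, U x -> exists n : nat,
    forall y : Pw, (forall i, (i < n)%N -> y i = x i) -> U y.

(* Michael topology: generated by the Cantor open sets and the singletons of
   infinite subsets; its open sets are exactly V `|` A with V Cantor open and
   A a set of infinite subsets of omega. *)
Definition michael_open (U : set Pw) : Prop :=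
  exists V A : set Pw, cantor_open V /\ (forall x, A x -> infinite_pt x) /\
    U = V `|` A.

Definition rel_open {T} (op : set T -> Prop) (X U : set T) : Prop :=
  exists W, op W /\ U = X `&` W.

Definition omega_cover {T} (op : set T -> Prop) (X : set T)
    (C : set (set T)) : Prop :=
  (forall U, C U -> rel_open op X U) /\
  X `<=` \bigcup_(U in C) U /\
  ~ C X /\
  (forall F : set T, finite_set F -> F `<=` X -> exists2 U, C U & F `<=` U).

Definition point_cofinite_cover {T} (op : set T -> Prop) (X : set T)
    (C : set (set T)) : Prop :=
  (forall U, C U -> rel_open op X U) /\
  X `<=` \bigcup_(U in C) U /\
  ~ finite_set C /\
  (forall x, X x -> finite_set [set U | C U /\ ~ U x]).

Definition gamma_space {T} (op : set T -> Prop) (X : set T) : Prop :=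
  forall C, omega_cover op X C ->
    exists2 D, D `<=` C & point_cofinite_cover op X D.

Definition lindelof {T} (op : set T -> Prop) (X : set T) : Prop :=
  forall C : set (set T), (forall U, C U -> op U) ->
    X `<=` \bigcup_(U in C) U ->
    exists2 D, D `<=` C & countable D /\ X `<=` \bigcup_(U in D) U.

Definition prod_open {T1 T2} (op1 : set T1 -> Prop) (op2 : set T2 -> Prop)
    (W : set (T1 * T2)) : Prop :=
  forall z, W z -> exists U V, op1 U /\ op2 V /\ U z.1 /\ V z.2 /\
    U `*` V `<=` W.

Definition irrationals (R : realType) : set R :=
  [set x | forall q : rat, x <> ratr q].

Definition le_star (f g : nat -> nat) : Prop :=
  exists m, forall n, (m <= n)%N -> (f n <= g n)%N.

Definition unbounded_family (A : set (nat -> nat)) : Prop :=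
  ~ exists g, forall f, A f -> le_star f g.

(* |A| = aleph_1: A is uncountable and admits a well-ordering all of whose
   proper initial segments are countable. *)
Definition card_aleph1 {T} (A : set T) : Prop :=
  ~ countable A /\
  exists lt : T -> T -> Prop,
    (forall a, A a -> ~ lt a a) /\
    (forall a b c, A a -> A b -> A c -> lt a b -> lt b c -> lt a c) /\
    (forall a b, A a -> A b -> a = b \/ lt a b \/ lt b a) /\
    (forall B, B `<=` A -> B !=set0 ->
        exists2 m, B m & forall b, B b -> b <> m -> lt m b) /\
    (forall a, A a -> countable [set b | A b /\ lt b a]).

(* b = aleph_1: the least cardinality of a <=*-unbounded family is aleph_1,
   i.e. no family of cardinality < aleph_1 (= countable) is unbounded, and
   there is an unbounded family of cardinality aleph_1. *)
Definition b_eq_aleph1 : Prop :=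
  (forall A : set (nat -> nat), countable A -> ~ unbounded_family A) /\
  (exists A : set (nat -> nat), unbounded_family A /\ card_aleph1 A).

(* Under b = aleph_1 there is an unbounded family (f_a) indexed by a well
   order with countable initial segments.  Along it we build a
   ⊆*-decreasing tower of infinite sets y_a, where y_a has gaps beyond f_a,
   and X is the set of finite sets together with the y_a.  A Michael-open set
   containing the finite sets contains a Cantor-open one, and a Cantor-open set
   containing the finite sets absorbs every point having gaps beyond some
   fixed function; by unboundedness only countably many y_a lack such gaps.
   This gives Lindelöfness and, applied countably often along the tower, the
   gamma property.  Finally y_a is sent to an irrational r_a = Σ 2^-c_j whose
   first exponents are large where y_a has few elements, so that no point
   (x, r) with x finite and r irrational is a limit of the points
   (y_a, r_a): these form an uncountable closed discrete subset of X × P. *)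

From HB Require Import structures.
From mathcomp Require Import all_boot all_order all_algebra.
From mathcomp Require Import all_classical all_reals all_analysis.
From mathcomp Require Import zify ring lra.
Import numFieldNormedType.Exports.
Set Implicit Arguments. Unset Strict Implicit. Unset Printing Implicit Defensive.
Local Open Scope classical_set_scope.

Definition infinite_pw (x : Pw) : Prop := forall n, exists2 m, (n <= m)%N & x m.

Definition almost_sub (u v : Pw) : Prop :=
  exists B, forall i, (B <= i)%N -> u i -> v i.

Definition empty_between (x : Pw) (m h : nat) : Prop :=
  forall i, (m <= i)%N -> (i < h)%N -> ~~ x i.

Definition has_gaps (x : Pw) (g : nat -> nat) : Prop :=
  forall N, exists2 m, (N <= m)%N & empty_between x m (g m).

Lemma almost_sub_refl u : almost_sub u u.
Proof. by exists 0%N. Qed.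

Lemma almost_sub_infinite u v : almost_sub u v -> infinite_pw u -> infinite_pw v.
Proof.
move=> [B H] iu n; have [m Hm um] := iu (maxn n B).
by exists m; [lia | apply: H => //; lia].
Qed.

Lemma almost_sub_gaps u v g : almost_sub u v -> has_gaps v g -> has_gaps u g.
Proof.
move=> [B HB] gv N; have [m Hm Hv] := gv (maxn N B); exists m; first lia.
move=> i mi ig; apply/negP => ui; have := Hv i mi ig; rewrite HB //; lia.
Qed.

Lemma countable_setU T (A B : set T) : countable A -> countable B -> countable (A `|` B).
Proof.
by move=> cA cB; rewrite -bigcup2E; apply: bigcup_countable => // -[|[|n]] _.
Qed.

Lemma finite_setN_ub (A : set nat) : finite_set A -> exists b, forall m, A m -> (m < b)%N.
Proof.
move=> /finite_seqP [s Hs]; exists (\max_(i <- s) i).+1 => m Am.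
have ms : m \in s by have : A m by []; rewrite Hs.
by rewrite ltnS (leq_bigmax_seq m ms).
Qed.

Lemma ub_finite_setN (A : set nat) b : (forall m, A m -> (m < b)%N) -> finite_set A.
Proof. by move=> H; apply: (sub_finite_set (B := `I_b)) => // m /H. Qed.

Lemma infinite_pwP x : infinite_pw x <-> infinite_pt x.
Proof.
split=> [ix /finite_setN_ub [b Hb] | ix n].
  by have [m Hm /Hb] := ix b; lia.
apply: contrapT => H; apply: ix; apply: (ub_finite_setN (b := n)) => m xm.
by rewrite ltnNge; apply/negP => Hm; apply: H; exists m.
Qed.

Lemma countable_enum T (F : set T) : countable F -> F !=set0 ->
  exists e : nat -> T, range e = F.
Proof.
move=> /countable_injP [f finj] [u0 Fu0].
pose e n := if pselect (exists2 u, F u & f u = n) is left H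
            then s2val (cid2 H) else u0.
have eF n : F (e n).
  by rewrite /e; case: pselect => [H|_] //; case: (cid2 H).
exists e; apply/seteqP; split=> [_ [n _ <-] // | u Fu].
exists (f u) => //; rewrite /e; case: pselect => [H|[]]; last by exists u.
case: (cid2 H) => v Fv /= fv; apply: finj => //; exact/mem_set.
Qed.

Definition meet_upto (z : nat -> Pw) (n : nat) : Pw :=
  fun i => all (fun k => z k i) (iota 0 n.+1).

Lemma meet_uptoS z n i : meet_upto z n.+1 i = meet_upto z n i && z n.+1 i.
Proof. by rewrite /meet_upto -[n.+2]addn1 iotaD all_cat /= andbT add0n. Qed.

Lemma meet_upto_sub z n k i : (k <= n)%N -> meet_upto z n i -> z k i.
Proof. by move=> kn /allP; apply; rewrite mem_iota; lia. Qed.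

Lemma homo_ltn_ge_id (s : nat -> nat) :
  {homo s : i j / (i < j)%N} -> forall i, (i <= s i)%N.
Proof. by move=> s_mono; elim=> // i IH; have := s_mono i i.+1 (ltnSn i); lia. Qed.

Lemma strict_range_infinite (s : nat -> nat) : {homo s : i j / (i < j)%N} ->
  infinite_pw (fun i => `[< range s i >]).
Proof.
move=> s_mono n; exists (s n); first exact: homo_ltn_ge_id.
by apply/asboolP; exists n.
Qed.

(* Pick an element of the [k]-th finite intersection above the previously
   picked one. *)
Lemma seq_pseudo_intersection (z : nat -> Pw) :
  (forall n, infinite_pw (meet_upto z n)) ->
  exists2 p, infinite_pw p & forall n, almost_sub p (z n).
Proof.
move=> zinf.
have /choice [nx nxP] : forall kt : nat * nat,
    exists m, (kt.2 < m)%N /\ meet_upto z kt.1 m.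
  by move=> [k t]; have [m Hm zm] := zinf k t.+1; exists m.
pose s := fix s k := if k is k'.+1 then nx (k, s k') else nx (0%N, 0%N).
have sP k : meet_upto z k (s k) by case: k => [|k]; exact: (nxP _).2.
have s_mono : {homo s : i j / (i < j)%N}.
  by apply: homo_ltn => [? ? ? /ltn_trans|k]; [apply | exact: (nxP (k.+1, s k)).1].
exists (fun i => `[< range s i >]); first exact: strict_range_infinite.
move=> n; exists (s n) => i ni /asboolP [k _ Ek]; subst i.
by apply: (meet_upto_sub (n := k)) => //; rewrite -(leq_mono s_mono).
Qed.

Lemma chain_pseudo_intersection (F : set Pw) : countable F ->
  (forall u, F u -> infinite_pw u) ->
  (forall u v, F u -> F v -> almost_sub u v \/ almost_sub v u) ->
  exists2 p, infinite_pw p & forall u, F u -> almost_sub p u.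
Proof.
move=> cF iF chF; have [F0 | neF] := eqVneq F set0.
  by exists (fun _ => true) => [n | u]; [exists n | rewrite F0].
have [e eF] := countable_enum cF ((set0P _).1 neF).
have eF' n : F (e n) by rewrite -eF; exists n.
have meet_above n : exists j, almost_sub (e j) (meet_upto e n).
  elim: n => [|n [j [B Hj]]].
    by exists 0%N; exists 0%N => i _ ei; rewrite /meet_upto /= ei.
  have [[B2 H2]|[B2 H2]] := chF _ _ (eF' j) (eF' n.+1).
  - exists j, (maxn B B2) => i Hi ei.
    rewrite meet_uptoS (Hj i) ?H2 //; lia.
  - exists n.+1, (maxn B B2) => i Hi ei.
    by rewrite meet_uptoS ei andbT; apply: Hj; [lia | apply: H2 => //; lia].
have [p ip Hp] : exists2 p, infinite_pw p & forall n, almost_sub p (e n).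
  apply: seq_pseudo_intersection => n; have [j Hj] := meet_above n.
  exact: almost_sub_infinite Hj (iF _ (eF' j)).
by exists p => // u; rewrite -eF => -[n _ <-].
Qed.

Definition next_in (p : Pw) (t : nat) : nat := xget 0%N [set m | (t < m)%N /\ p m].

Lemma next_inP p t : infinite_pw p -> (t < next_in p t)%N /\ p (next_in p t).
Proof.
move=> ip; apply: (xgetPex 0%N (P := [set m | (t < m)%N /\ p m])).
by have [m Hm pm] := ip t.+1; exists m.
Qed.

(* Each chosen element [x] is followed by a gap up to [F x] and by one skipped
   element of [p]; the gaps control domination, the skips make the sets of a
   tower distinct. *)
Fixpoint sparse_seq (F : nat -> nat) (p : Pw) (i : nat) : nat :=
  if i is i'.+1 then next_in p (next_in p (F (sparse_seq F p i'))) else next_in p 0.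

Definition sparse_sub (F : nat -> nat) (p : Pw) : Pw :=
  fun n => `[< range (sparse_seq F p) n >].

Section SparseSubset.
Variables (F : nat -> nat) (p : Pw).
Hypotheses (p_inf : infinite_pw p) (F_ge : forall x, (x <= F x)%N).
Local Notation xs := (sparse_seq F p).

Lemma sparse_seq_in i : p (xs i).
Proof. by case: i => [|i] /=; exact: (next_inP _ p_inf).2. Qed.

Lemma sparse_seq_skip i : (F (xs i) < next_in p (F (xs i)) < xs i.+1)%N.
Proof. by rewrite (next_inP _ p_inf).1 (next_inP _ p_inf).1. Qed.

Lemma sparse_seq_mono : {homo xs : i j / (i < j)%N}.
Proof.
apply: homo_ltn => [? ? ? /ltn_trans | i]; first exact.
by have := sparse_seq_skip i; have := F_ge (xs i); lia.
Qed.

Lemma sparse_subP n : reflect (exists i, xs i = n) (sparse_sub F p n).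
Proof. by apply: (iffP (asboolP _)) => [[i _ <-] | [i <-]]; exists i. Qed.

Lemma sparse_sub_sub n : sparse_sub F p n -> p n.
Proof. by move=> /sparse_subP [i <-]; exact: sparse_seq_in. Qed.

Lemma sparse_sub_infinite : infinite_pw (sparse_sub F p).
Proof. exact: strict_range_infinite sparse_seq_mono. Qed.

Lemma sparse_sub_between i k : (xs i < k < xs i.+1)%N -> ~~ sparse_sub F p k.
Proof.
move=> /andP [ik ki]; apply/negP => /sparse_subP [j Hj]; subst k.
by move: ik ki; rewrite !ltnNge !(leq_mono sparse_seq_mono); lia.
Qed.

Lemma sparse_sub_gap x k : sparse_sub F p x -> (x < k <= F x)%N -> ~~ sparse_sub F p k.
Proof.
move=> /sparse_subP [i <-] /andP [xk kF]; apply: (sparse_sub_between (i := i)).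
by have := sparse_seq_skip i; lia.
Qed.

Lemma sparse_sub_coinfinite n : exists2 m, (n <= m)%N & p m /\ ~~ sparse_sub F p m.
Proof.
have s_ge := homo_ltn_ge_id sparse_seq_mono.
exists (next_in p (F (xs n))); [ | split; first exact: (next_inP _ p_inf).2].
  by have := sparse_seq_skip n; have := F_ge (xs n); have := s_ge n; lia.
apply: (sparse_sub_between (i := n)); have := sparse_seq_skip n; have := F_ge (xs n); lia.
Qed.

End SparseSubset.

Record aleph1_order T (A : set T) (lt : T -> T -> Prop) : Prop := {
  ord_irr : forall a, A a -> ~ lt a a;
  ord_trans : forall a b c, A a -> A b -> A c -> lt a b -> lt b c -> lt a c;
  ord_total : forall a b, A a -> A b -> a = b \/ lt a b \/ lt b a;
  ord_min : forall B, B `<=` A -> B !=set0 ->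
    exists2 m, B m & forall b, B b -> b <> m -> lt m b;
  ord_countable_pred : forall a, A a -> countable [set b | A b /\ lt b a] }.

Definition pred_in T (A : set T) lt (b a : T) : Prop := A b /\ A a /\ lt b a.

Lemma aleph1_order_wf T (A : set T) lt : aleph1_order A lt -> well_founded (pred_in A lt).
Proof.
move=> W a0; apply: contrapT => Na0.
have A0 : A a0 by apply: contrapT => nA; apply: Na0; constructor => b [_ [/nA]].
have [m [Am NAm] Hm] := ord_min W (B := [set a | A a /\ ~ Acc (pred_in A lt) a])
  (fun a H => proj1 H) (ex_intro _ a0 (conj A0 Na0)).
apply: NAm; constructor => b [Ab [_ lbm]]; apply: contrapT => Nb.
have bm : b <> m by move=> E; subst b; exact: (ord_irr W Am lbm).
exact: (ord_irr W Am (ord_trans W Am Ab Am (Hm b (conj Ab Nb) bm) lbm)).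
Qed.

Lemma countable_pred_le T (A : set T) lt a : aleph1_order A lt -> A a ->
  countable [set b | A b /\ (b = a \/ lt b a)].
Proof.
move=> W Aa; apply: (sub_countable (B := [set a] `|` [set b | A b /\ lt b a])).
  by apply: subset_card_le => b [Ab [->|lba]]; [left | right].
by apply: countable_setU; [exact: countable1 | exact: (ord_countable_pred W Aa)].
Qed.

Definition majorant (a : nat -> nat) (m : nat) : nat := m + \max_(i < m.+1) a i.

Lemma majorant_ge_id a m : (m <= majorant a m)%N.
Proof. exact: leq_addr. Qed.

Lemma majorant_ge a m : (a m <= majorant a m)%N.
Proof.
rewrite /majorant; have /= := @leq_bigmax _ (fun i : 'I_m.+1 => a i) (Ordinal (ltnSn m)).
lia.
Qed.

Lemma majorant_mono a : {homo majorant a : m n / (m <= n)%N}.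
Proof.
move=> m n mn; apply: leq_add => //; apply/bigmax_leqP => i _.
have i_n : (i < n.+1)%N := leq_trans (ltn_ord i) (mn : (m < n.+1)%N).
exact: (@leq_bigmax _ (fun i : 'I_n.+1 => a i) (Ordinal i_n)).
Qed.

Section Tower.
Variables (A : set (nat -> nat)) (lt : (nat -> nat) -> (nat -> nat) -> Prop).
Hypothesis W : aleph1_order A lt.

(* At [a]: a pseudo-intersection of the earlier sets, thinned out with gaps
   dominating [a]. *)
Definition tower_step (a : nat -> nat) (prev : forall b, pred_in A lt b a -> Pw) : Pw :=
  sparse_sub (majorant a) (xget (fun _ => true)
    [set p | infinite_pw p /\ forall b (H : pred_in A lt b a), almost_sub p (prev b H)]).

Definition tower : (nat -> nat) -> Pw := Fix (aleph1_order_wf W) (fun _ => Pw) tower_step.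

Lemma tower_eq a : tower a = sparse_sub (majorant a) (xget (fun _ => true)
  [set p | infinite_pw p /\ forall b, pred_in A lt b a -> almost_sub p (tower b)]).
Proof.
rewrite /tower Fix_eq // => x f g Hfg; congr (sparse_sub _ (xget _ _)).
by apply/seteqP; split=> p [ip Hp]; split=> // b H; [rewrite -Hfg | rewrite Hfg].
Qed.

Definition tower_inv (a : nat -> nat) : Prop :=
  infinite_pw (tower a) /\
  (forall x k, tower a x -> (x < k <= majorant a x)%N -> ~~ tower a k) /\
  (forall b, A b -> lt b a -> almost_sub (tower a) (tower b) /\ tower a <> tower b).

Lemma towerP a : A a -> tower_inv a.
Proof.
elim/(well_founded_ind (aleph1_order_wf W)): a => a IH Aa.
have IHa b : A b -> lt b a -> tower_inv b by move=> Ab lba; exact: IH.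
set P := [set p | infinite_pw p /\ forall b, pred_in A lt b a -> almost_sub p (tower b)].
have [ip Hp] : P (xget (fun _ => true) P).
  apply: xgetPex; pose Fam := tower @` [set b | A b /\ lt b a].
  have [p ip Hp] : exists2 p, infinite_pw p & forall u, Fam u -> almost_sub p u.
    apply: chain_pseudo_intersection.
    - exact: (sub_countable (card_image_le _ _) (ord_countable_pred W Aa)).
    - by move=> _ [b [Ab lba] <-]; exact: (IHa b Ab lba).1.
    - move=> _ _ [b [Ab lba] <-] [c [Ac lca] <-].
      case: (ord_total W Ab Ac) => [->|[lbc|lcb]]; first by left; exact: almost_sub_refl.
      + by right; exact: ((IHa c Ac lca).2.2 b Ab lbc).1.
      + by left; exact: ((IHa b Ab lba).2.2 c Ac lcb).1.
  by exists p; split=> // b [Ab [_ lba]]; apply: Hp; exists b.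
rewrite /tower_inv tower_eq -/P; set p := xget _ P.
have F_ge := majorant_ge_id a.
split; first exact: sparse_sub_infinite.
split=> [x k | b Ab lba]; first exact: sparse_sub_gap.
have [B HB] := Hp b (conj Ab (conj Aa lba)).
split; first by exists B => i Bi /(sparse_sub_sub ip); exact: HB.
move=> E; have [m Bm [pm]] := sparse_sub_coinfinite ip F_ge B.
by rewrite E HB.
Qed.

Lemma tower_infinite a : A a -> infinite_pw (tower a).
Proof. by move=> /towerP []. Qed.

Lemma tower_almost_sub a b : A a -> A b -> lt b a -> almost_sub (tower a) (tower b).
Proof. by move=> /towerP [_ [_ H]] Ab /(H b Ab) []. Qed.

Lemma tower_inj a b : A a -> A b -> tower a = tower b -> a = b.
Proof.
move=> Aa Ab E; case: (ord_total W Aa Ab) => [//|[lab|lba]].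
- by case: ((towerP Ab).2.2 a Aa lab).2.
- by case: ((towerP Aa).2.2 b Ab lba).2.
Qed.

(* Where [a] exceeds a double majorant of [g], the gap after an element of
   [tower a] swallows a whole interval [[m, g m)]. *)
Lemma tower_has_gaps : unbounded_family A ->
  forall g : nat -> nat, exists2 a, A a & has_gaps (tower a) g.
Proof.
move=> U g; pose G m := majorant g (majorant g m).
have [a Aa Na] : exists2 a, A a & ~ le_star a G.
  apply: contrapT => H; apply: U; exists G => f Af; apply: contrapT => Nf.
  by apply: H; exists f.
exists a => // N.
have [n Nn an] : exists2 n, (N <= n)%N & (G n < a n)%N.
  apply: contrapT => H; apply: Na; exists N => n Nn; rewrite leqNgt.
  by apply/negP => C; apply: H; exists n.
have [_ [gap _]] := towerP Aa.
have g_le m : (g m <= majorant g m)%N := majorant_ge g m.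
case: (pselect (exists x, (n <= x < majorant g n)%N /\ tower a x)) =>
    [[x [/andP [nx xg] yx]] | Nx].
- exists x.+1; first lia.
  move=> i xi ig; apply: (gap x) => //.
  have := majorant_mono g (_ : (x.+1 <= majorant g n)%N); have := g_le x.+1.
  have := majorant_ge a n; have := majorant_mono a nx; rewrite /G in an; lia.
- exists n => // i ni ig; apply/negP => yi; apply: Nx; exists i; split=> //.
  by apply/andP; split=> //; have := g_le n; lia.
Qed.

End Tower.

Record gamma_tower A lt (y : (nat -> nat) -> Pw) : Prop := {
  gt_order : aleph1_order A lt;
  gt_uncountable : ~ countable A;
  gt_infinite : forall a, A a -> infinite_pw (y a);
  gt_almost_sub : forall a b, A a -> A b -> lt b a -> almost_sub (y a) (y b);
  gt_inj : forall a b, A a -> A b -> y a = y b -> a = b;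
  gt_has_gaps : forall g, exists2 a, A a & has_gaps (y a) g }.

Lemma gamma_tower_exists : b_eq_aleph1 -> exists A lt y, @gamma_tower A lt y.
Proof.
move=> [_ [A [U [unc [lt [irr [tr [tot [mn cnt]]]]]]]]].
have W : aleph1_order A lt by split.
exists A, lt, (tower W); split=> //.
- exact: tower_infinite.
- exact: tower_almost_sub.
- exact: tower_inj.
- exact: tower_has_gaps.
Qed.

Lemma countable_without_gaps A lt y (T : gamma_tower A lt y) g :
  countable [set a | A a /\ ~ has_gaps (y a) g].
Proof.
have W := gt_order T; have [a0 Aa0 M0] := gt_has_gaps T g.
apply: (sub_countable _ (countable_pred_le W Aa0)); apply: subset_card_le => a [Aa Na].
split=> //; case: (ord_total W Aa Aa0) => [->|[lt_a | lt_a]]; [by left | by right |].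
by case: Na; apply: almost_sub_gaps M0; exact: (gt_almost_sub T).
Qed.

Definition pw_of_set m (S : {set 'I_m}) : Pw :=
  fun n => if insub n is Some i then i \in S else false.

Lemma pw_of_set_finite m (S : {set 'I_m}) : ~ infinite_pt (pw_of_set S).
Proof.
apply; apply: (ub_finite_setN (b := m)) => n /=; rewrite /pw_of_set.
by case: insubP => // i _ <-.
Qed.

Lemma pw_of_set_restrict m (y : Pw) n :
  pw_of_set [set i : 'I_m | y i]%SET n = (n < m)%N && y n.
Proof.
by rewrite /pw_of_set; case: insubP => [i -> <-|/negbTE ->] //; rewrite inE.
Qed.

Lemma countable_finite_pw : countable [set x : Pw | ~ infinite_pt x].
Proof.
apply: (sub_countable (B := (fun s : seq nat => (fun n => n \in s) : Pw) @` setT)).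
  apply: subset_card_le => x /= /contrapT /finite_seqP [s Hs]; exists s => //.
  apply: funext => n; apply/idP/idP => H.
  - have Hn : [set` s] n := H. by move: Hn; rewrite -Hs.
  - by have : [set n | x n] n by []; rewrite Hs.
exact: sub_countable (card_image_le _ _) (countableP _).
Qed.

Lemma cantor_open_bigcup I (D : set I) (V : I -> set Pw) :
  (forall i, D i -> cantor_open (V i)) -> cantor_open (\bigcup_(i in D) V i).
Proof.
move=> oV x [i Di Vx]; have [n Hn] := oV i Di x Vx.
by exists n => z /Hn Vz; exists i.
Qed.

Definition cantor_modulus (V : set Pw) (s : Pw) : nat :=
  xget 0%N [set n | forall z : Pw, (forall i, (i < n)%N -> z i = s i) -> V z].

Lemma cantor_modulusP V s : cantor_open V -> V s ->
  forall z : Pw, (forall i, (i < cantor_modulus V s)%N -> z i = s i) -> V z.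
Proof.
move=> oV Vs; apply: (xgetPex 0%N
  (P := [set n | forall z : Pw, (forall i, (i < n)%N -> z i = s i) -> V z])).
by have [n Hn] := oV s Vs; exists n.
Qed.

Definition finite_sets_modulus (V : set Pw) (m : nat) : nat :=
  \max_(S : {set 'I_m}) cantor_modulus V (pw_of_set S).

(* Below [m] a point agrees with one of the finitely many subsets of [[0, m)];
   being empty on [[m, h)] makes it agree with that subset long enough. *)
Lemma cantor_open_empty_between V m y : cantor_open V ->
  (forall S : {set 'I_m}, V (pw_of_set S)) ->
  empty_between y m (finite_sets_modulus V m) -> V y.
Proof.
move=> oV VS Hy; set S := [set i : 'I_m | y i]%SET.
have hle : (cantor_modulus V (pw_of_set S) <= finite_sets_modulus V m)%N.
  exact: (leq_bigmax S).
apply: (cantor_modulusP oV (VS S)) => i Hi; rewrite pw_of_set_restrict.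
by case: (ltnP i m) => im //=; apply/negbTE; apply: Hy => //; lia.
Qed.

Lemma cantor_open_has_gaps V : cantor_open V -> (forall x, ~ infinite_pt x -> V x) ->
  forall y, has_gaps y (finite_sets_modulus V) -> V y.
Proof.
move=> oV Vfin y /(_ 0%N) [m _]; apply: cantor_open_empty_between => // S.
exact/Vfin/pw_of_set_finite.
Qed.

Definition cantor_part (U : set Pw) : set Pw :=
  xget set0 [set V | cantor_open V /\
    exists B, (forall x, B x -> infinite_pt x) /\ U = V `|` B].

Lemma cantor_partP U : michael_open U ->
  [/\ cantor_open (cantor_part U), cantor_part U `<=` U &
      forall s, U s -> ~ infinite_pt s -> cantor_part U s].
Proof.
move=> MU; have [oV [B [HB E]]] : cantor_open (cantor_part U) /\
    exists B, (forall x, B x -> infinite_pt x) /\ U = cantor_part U `|` B.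
  apply: (xgetPex set0 (P := [set V | cantor_open V /\
    exists B, (forall x, B x -> infinite_pt x) /\ U = V `|` B])).
  by move: MU => [V [B [? [? ?]]]]; exists V; split=> //; exists B.
split=> // [z Vz | s]; first by rewrite E; left.
by rewrite {1}E => -[//|/HB].
Qed.

Definition tower_space (A : set (nat -> nat)) (y : (nat -> nat) -> Pw) : set Pw :=
  [set x | ~ infinite_pt x] `|` y @` A.

(* The Cantor parts of the members covering the finite sets form a Cantor open
   set containing all finite sets; it contains every point with gaps beyond a
   fixed function, and only countably many points of the tower lack them. *)
Lemma tower_space_lindelof A lt y : gamma_tower A lt y ->
  lindelof michael_open (tower_space A y).
Proof.
move=> T C HC Cov; set X := tower_space A y.
have /choice [U UP] : forall x, exists U, X x -> C U /\ U x.
  move=> x; case: (pselect (X x)) => [/Cov [U CU Ux] | NX]; first by exists U.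
  by exists set0.
have Ufin s : ~ infinite_pt s -> C (U s) /\ U s s by move=> Fs; apply: UP; left.
pose V := \bigcup_(s in [set s | ~ infinite_pt s]) cantor_part (U s).
have oV : cantor_open V.
  by apply: cantor_open_bigcup => s /Ufin [/HC /cantor_partP []].
have Vfin x : ~ infinite_pt x -> V x.
  move=> Fx; exists x => //.
  by have [/HC /cantor_partP [_ _ H] Uxx] := Ufin x Fx; exact: H.
pose Bad := [set a | A a /\ ~ V (y a)].
have cBad : countable Bad.
  apply: (sub_countable _ (countable_without_gaps T (finite_sets_modulus V))).
  by apply: subset_card_le => a [Aa NV]; split=> // /(cantor_open_has_gaps oV Vfin).
exists (U @` ([set x | ~ infinite_pt x] `|` y @` Bad)).
  by move=> _ [x Hx <-]; apply: (UP x _).1; case: Hx => [|[a [Aa _] <-]]; [left | right].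
split.
  apply: sub_countable (card_image_le _ _) _.
  apply: countable_setU; first exact: countable_finite_pw.
  exact: sub_countable (card_image_le _ _) cBad.
move=> x Xx; case: (pselect (infinite_pt x)) => [Ix | Fx]; last first.
  by exists (U x); [exists x => //; left | exact: (UP x Xx).2].
case: (Xx) => [// | [a Aa Ex]]; subst x.
case: (pselect (V (y a))) => [[s Fs Vs] | NV].
  exists (U s); first by exists s => //; left.
  by have [/HC /cantor_partP [_ sub _] _] := Ufin s Fs; apply: sub.
by exists (U (y a)); [exists (y a) => //; right; exists a | exact: (UP _ Xx).2].
Qed.

(* Finitely many distinct proper [D k] would leave some point outside
   infinitely many of them. *)
Lemma eventual_cover_point_cofinite T (op : set T -> Prop) (X : set T)
    (D : nat -> set T) :
  (forall k, rel_open op X (D k)) -> (forall k, D k <> X) ->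
  (forall x, X x -> exists K, forall k, (K <= k)%N -> D k x) ->
  point_cofinite_cover op X (range D).
Proof.
move=> oD DX evD; have DsubX k : D k `<=` X by have [W [_ ->]] := oD k => x [].
split; first by move=> _ [k _ <-].
split; first by move=> x /evD [K HK]; exists (D K); [exists K | exact: HK].
split=> [FD | x /evD [K HK]].
  have /choice [xo xoP] : forall k, exists x, X x /\ ~ D k x.
    move=> k; apply: contrapT => H; apply: (DX k); apply/seteqP; split=> // x Xx.
    by apply: contrapT => NDx; apply: H; exists x.
  have /choice [K KP] : forall k, exists K, forall j, (K <= j)%N -> D j (xo k).
    by move=> k; exact: evD (xoP k).1.
  have /choice [idx idxP] : forall U, exists k, range D U -> D k = U.
    move=> U; case: (pselect (range D U)) => [[k _ <-] | NU]; first by exists k.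
    by exists 0%N => /NU.
  have [Kb HKb] := finite_setN_ub (finite_image (K \o idx) FD).
  have DKb : range D (D Kb) by exists Kb.
  apply: (xoP (idx (D Kb))).2; rewrite idxP //; apply: KP.
  by apply: ltnW; apply: HKb; exists (D Kb).
apply: (sub_finite_set (B := D @` `I_K)); last exact: finite_image.
by move=> _ [[k _ <-] NU]; exists k => //=; rewrite ltnNge; apply/negP => /HK.
Qed.

Definition grid (E : nat -> nat -> Pw) (m : nat) : set Pw :=
  [set E ji.1 ji.2 | ji in `I_m.+1 `*` `I_m.+1].

Section GammaSpace.
Variables (A : set (nat -> nat)) (lt : (nat -> nat) -> (nat -> nat) -> Prop).
Variables (y : (nat -> nat) -> Pw) (T : gamma_tower A lt y).
Local Notation X := (tower_space A y).
Variable C : set (set Pw).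
Hypothesis HC : omega_cover michael_open X C.

Definition absorbing (E : nat -> nat -> Pw) (m : nat) (Uh : set Pw * nat) : Prop :=
  [/\ C Uh.1, grid E m `<=` Uh.1 &
      forall x, X x -> empty_between x m Uh.2 -> Uh.1 x].

Lemma absorbing_exists E m : (forall j i, X (E j i)) -> exists Uh, absorbing E m Uh.
Proof.
move=> EX; have [oC [_ [_ finC]]] := HC.
pose F := grid E m `|` range (@pw_of_set m).
have finF : finite_set F.
  rewrite finite_setU; split; apply: finite_image => //.
  exact: finite_setX (finite_II _) (finite_II _).
have FX : F `<=` X.
  by move=> _ [[[j i] _ <-] | [S _ <-]]; [exact: EX | left; exact: pw_of_set_finite].
have [U CU FU] := finC F finF FX.
have [W [MW EW]] := oC U CU; have [oV VW Vfin] := cantor_partP MW.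
exists (U, finite_sets_modulus (cantor_part W) m); split=> //=.
  by move=> x Gx; apply: FU; left.
move=> x Xx /(cantor_open_empty_between oV) Vx; rewrite EW; split=> //.
apply: VW; apply: Vx => S; apply: Vfin; last exact: pw_of_set_finite.
have : U (pw_of_set S) by apply: FU; right; exists S.
by rewrite EW => -[].
Qed.

Definition absorber (E : nat -> nat -> Pw) (m : nat) : set Pw * nat :=
  xget (set0, 0%N) (absorbing E m).

Lemma absorberP E m : (forall j i, X (E j i)) -> absorbing E m (absorber E m).
Proof. by move=> EX; apply: xgetPex; exact: absorbing_exists. Qed.

Definition stage_top (E : nat -> nat -> Pw) : nat -> nat :=
  xget (fun _ => 0%N) [set a | A a /\ has_gaps (y a) (fun m => (absorber E m).2)].

Lemma stage_topP E :
  A (stage_top E) /\ has_gaps (y (stage_top E)) (fun m => (absorber E m).2).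
Proof.
apply: (xgetPex _ (P := [set a | A a /\ has_gaps (y a) (fun m => (absorber E m).2)])).
by have [a Aa Ha] := gt_has_gaps T (fun m => (absorber E m).2); exists a.
Qed.

Definition below (a : nat -> nat) : set Pw := y @` [set b | A b /\ (b = a \/ lt b a)].

Definition below_enum (a : nat -> nat) : nat -> Pw :=
  xget (fun _ => y a) [set e | range e = below a].

Lemma below_enumP a : A a -> range (below_enum a) = below a.
Proof.
move=> Aa; apply: (xgetPex _ (P := [set e | range e = below a])).
apply: countable_enum.
  exact: (sub_countable (card_image_le _ _) (countable_pred_le (gt_order T) Aa)).
by exists (y a), a => //; split=> //; left.
Qed.

(* [stage k j] enumerates [below] of the [j]-th top for [j < k]; the top of
   stage [k] is chosen with gaps beyond the absorbing bounds of stage [k]. *)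
Fixpoint stage (k : nat) : nat -> nat -> Pw :=
  if k is k'.+1 then
    fun j => if j == k' then below_enum (stage_top (stage k')) else stage k' j
  else fun _ _ _ => false.

Local Notation top k := (stage_top (stage k)).

Lemma stage_in k j i : X (stage k j i).
Proof.
elim: k j i => [|k IH] j i /=.
  by left; apply; apply: (ub_finite_setN (b := 0%N)).
case: eqP => _; last exact: IH.
have [Atop _] := stage_topP (stage k).
have : range (below_enum (top k)) (below_enum (top k) i) by exists i.
by rewrite below_enumP // => -[b [Ab _] <-]; right; exists b.
Qed.

Lemma stage_stable k0 k : (k0 < k)%N -> stage k k0 = below_enum (top k0).
Proof.
elim: k => // k IH k0k /=; case: eqP => [-> // | ne]; apply: IH.
by move: k0k; rewrite ltnS leq_eqVlt => /orP [/eqP|].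
Qed.

(* [d] is the least element above all the tops; it exists because the tops
   have only countably many predecessors. *)
Lemma stage_ceiling : exists2 d, A d &
  (forall k, almost_sub (y d) (y (top k))) /\
  (forall b, A b -> (exists k, below (top k) (y b)) \/ almost_sub (y b) (y d)).
Proof.
have W := gt_order T; have Atop k := (stage_topP (stage k)).1.
pose I := [set b | A b /\ exists k, b = top k \/ lt b (top k)].
have cI : countable I.
  apply: (sub_countable (B := \bigcup_k [set b | A b /\ (b = top k \/ lt b (top k))])).
    by apply: subset_card_le => b [Ab [k Hk]]; exists k.
  by apply: bigcup_countable => // k _; exact: countable_pred_le W (Atop k).
have neAI : (A `\` I) !=set0.
  apply/set0P/negP => /eqP AI; apply: (gt_uncountable T); apply: sub_countable cI.
  apply: subset_card_le => b Ab; apply: contrapT => NIb.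
  by have : (A `\` I) b by []; rewrite AI.
have [d [Ad NId] dmin] := ord_min W (@subDsetl _ _ _) neAI.
exists d => //; split=> [k | b Ab].
  apply: (gt_almost_sub T) => //.
  case: (ord_total W (Atop k) Ad) => [E | [// | lt_d]]; case: NId; split=> //.
  - by exists k; left.
  - by exists k; right.
case: (pselect (I b)) => [[_ [k Hk]] | NIb]; first by left; exists k, b.
right; case: (pselect (b = d)) => [-> | nbd]; first exact: almost_sub_refl.
exact: (gt_almost_sub T Ab Ad (dmin b (conj Ab NIb) nbd)).
Qed.

Section EventualAbsorption.
Variables (d : nat -> nat) (m : nat -> nat).
Hypothesis ceil_below :
  forall b, A b -> (exists k, below (top k) (y b)) \/ almost_sub (y b) (y d).
Hypotheses (m_ge : forall k, (k <= m k)%N)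
  (m_gap : forall k, empty_between (y d) (m k) (absorber (stage k) (m k)).2).

Lemma eventually_absorbed x : X x ->
  exists K, forall k, (K <= k)%N -> (absorber (stage k) (m k)).1 x.
Proof.
have absP k := absorberP (m k) (@stage_in k).
case=> [Fx | [b Ab <-]].
  have [bd Hbd] := finite_setN_ub (contrapT Fx).
  exists bd => k Kk; have [_ _ Habs] := absP k; apply: Habs; first by left.
  by move=> i mi _; apply/negP => /Hbd; have := m_ge k; lia.
case: (ceil_below Ab) => [[k0 Hb] | [B HB]].
  have Atop := (stage_topP (stage k0)).1.
  move: Hb; rewrite -below_enumP // => -[n _ En].
  exists (maxn k0.+1 n) => k Kk; have [_ Hgrid _] := absP k; apply: Hgrid.
  exists (k0, n); last by rewrite /= stage_stable //; lia.
  by split=> /=; have := m_ge k; lia.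
exists B => k Kk; have [_ _ Habs] := absP k; apply: Habs; first by right; exists b.
move=> i mi ih; apply/negP => ybi; have := m_gap mi ih.
by rewrite HB //; have := m_ge k; lia.
Qed.

End EventualAbsorption.

Lemma omega_cover_point_cofinite_sub :
  exists2 D, D `<=` C & point_cofinite_cover michael_open X D.
Proof.
have [d Ad [d_sub ceil_below]] := stage_ceiling.
have /choice [m mP] : forall k, exists m,
    (k <= m)%N /\ empty_between (y d) m (absorber (stage k) m).2.
  move=> k; have [B HB] := d_sub k; have [_ gaps] := stage_topP (stage k).
  have [m Hm Hgap] := gaps (maxn k B); exists m; split; first lia.
  move=> i mi ih; apply/negP => ydi; have := Hgap i mi ih.
  by rewrite HB //; lia.
pose D k := (absorber (stage k) (m k)).1.
have CD k : C (D k) by have [] := absorberP (m k) (@stage_in k).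
exists (range D); first by move=> _ [k _ <-].
have [oC [_ [NCX _]]] := HC.
apply: eventual_cover_point_cofinite => [k | k E | x].
- exact: oC.
- by apply: NCX; rewrite -E.
- exact: (eventually_absorbed ceil_below (fun k => (mP k).1) (fun k => (mP k).2)).
Qed.

End GammaSpace.

Lemma tower_space_gamma A lt y : gamma_tower A lt y ->
  gamma_space michael_open (tower_space A y).
Proof. by move=> T C HC; exact: (omega_cover_point_cofinite_sub T HC). Qed.

Definition count_below (z : Pw) (N : nat) : nat := \sum_(0 <= i < N) (z i : nat).

Lemma count_below_split z N M : (N <= M)%N ->
  count_below z M = (count_below z N + \sum_(N <= i < M) (z i : nat))%N.
Proof. by move=> NM; rewrite /count_below (@big_cat_nat _ _ _ N 0 M). Qed.

Lemma count_below_mono z : {homo count_below z : N M / (N <= M)%N}.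
Proof. by move=> N M NM; rewrite (count_below_split z NM) leq_addr. Qed.

Lemma count_belowS z N : count_below z N.+1 = (count_below z N + z N)%N.
Proof. by rewrite /count_below big_nat_recr. Qed.

Lemma count_below_unbounded z :
  infinite_pw z -> forall k, exists N, (k < count_below z N)%N.
Proof.
move=> iz; elim=> [|k [N HN]].
  by have [m _ zm] := iz 0%N; exists m.+1; rewrite count_belowS zm; lia.
have [m Nm zm] := iz N; exists m.+1; rewrite count_belowS zm.
by have := count_below_mono z Nm; lia.
Qed.

Lemma count_below_eq (z x : Pw) N : (forall i, (i < N)%N -> z i = x i) ->
  count_below z N = count_below x N.
Proof. by move=> H; apply: eq_big_nat => i /andP [_ iN]; rewrite H. Qed.

Lemma count_below_stable (x : Pw) n0 N : (forall i, x i -> (i < n0)%N) -> (n0 <= N)%N ->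
  count_below x N = count_below x n0.
Proof.
move=> Hb nN; rewrite (count_below_split x nN) big1_seq ?addn0 // => i /andP [_].
by rewrite mem_index_iota => /andP [n0i _]; case E: (x i) => //; have := Hb i E; lia.
Qed.

Definition exp_bound (z : Pw) (k : nat) : nat :=
  xget 0%N [set t | forall N, (count_below z N <= k)%N -> (2 * N.+1 <= 2 ^ t)%N].

Lemma exp_boundP z k : infinite_pw z ->
  forall N, (count_below z N <= k)%N -> (2 * N.+1 <= 2 ^ exp_bound z k)%N.
Proof.
move=> iz; apply: (xgetPex 0%N
  (P := [set t | forall N, (count_below z N <= k)%N -> (2 * N.+1 <= 2 ^ t)%N])).
have [N0 HN0] := count_below_unbounded iz k; exists N0.+1 => N HN.
have NN0 : (N < N0)%N by rewrite ltnNge; apply/negP => /(count_below_mono z); lia.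
by have := ltn_expl N0 (ltnSn 1); rewrite expnS; lia.
Qed.

(* The exponents of the dyadic expansion attached to [z]: they grow fast
   enough to make the sum irrational, and the first [k] of them are large
   wherever [z] has few elements. *)
Fixpoint dyad_exp (z : Pw) (j : nat) : nat :=
  if j is j'.+1 then (dyad_exp z j' + j' + 2 + exp_bound z j)%N else exp_bound z 0.

Lemma dyad_exp_bound z j : (exp_bound z j <= dyad_exp z j)%N.
Proof. by case: j => [|j] //=; lia. Qed.

Lemma dyad_exp_step z j : (dyad_exp z j + j + 2 <= dyad_exp z j.+1)%N.
Proof. by rewrite /=; lia. Qed.

Lemma dyad_exp_mono z : {homo dyad_exp z : i j / (i <= j)%N}.
Proof.
move=> i j /subnK <-; elim: (j - i)%N => [//|d IH].
by rewrite addSn; have := dyad_exp_step z (d + i); lia.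
Qed.

Section DyadicReals.
Variable R : realType.
Local Open Scope ring_scope.
Import Order.TTheory GRing.Theory Num.Theory.

Definition dyad (c : nat) : R := ((2 ^ c)%N%:R)^-1.

Lemma dyad_gt0 c : 0 < dyad c.
Proof. by rewrite /dyad invr_gt0 ltr0n expn_gt0. Qed.

Lemma dyad_le c d : (c <= d)%N -> dyad d <= dyad c.
Proof.
by move=> cd; rewrite /dyad lef_pV2 ?posrE ?ltr0n ?expn_gt0 // ler_nat leq_exp2l.
Qed.

Lemma dyadS c : 2 * dyad c.+1 = dyad c.
Proof. by rewrite /dyad expnS natrM invfM mulrA mulfV ?mul1r // pnatr_eq0. Qed.

Lemma dyadD a b : dyad (a + b) = dyad a * dyad b.
Proof. by rewrite /dyad expnD natrM invfM. Qed.

Lemma exp2_dyad a b : (a <= b)%N -> (2 ^ b)%N%:R * dyad a = (2 ^ (b - a))%N%:R.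
Proof. by move=> ab; rewrite -{1}(subnK ab) expnD natrM /dyad -mulrA mulfV ?mulr1. Qed.

Lemma exp2_dyadK c : (2 ^ c)%N%:R * dyad c = 1.
Proof. by rewrite /dyad mulfV // pnatr_eq0 expn_eq0. Qed.

Lemma dyad_small (e : R) : 0 < e -> exists C, dyad C < e.
Proof.
move=> e0; set C := Num.Def.archi_bound e^-1; exists C.
have h1 : e^-1 < C%:R by apply: archi_boundP; rewrite invr_ge0 ltW.
have h2 : (C%:R : R) <= (2 ^ C)%N%:R by rewrite ler_nat ltnW // ltn_expl.
rewrite /dyad -[e]invrK ltf_pV2 ?posrE ?ltr0n ?expn_gt0 ?invr_gt0 //.
exact: lt_le_trans h1 h2.
Qed.

Definition dyadic_sums (k : nat) : set R :=
  [set g | exists2 s : seq nat, (size s <= k)%N & g = \sum_(c <- s) dyad c].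

Lemma irrational_subr_dyad r c : @irrationals R r -> @irrationals R (r - dyad c).
Proof.
move=> H q E; apply: (H (q + (2 ^ c)%N%:R^-1)); rewrite rmorphD fmorphV rmorph_nat.
by apply/eqP; rewrite -subr_eq; apply/eqP; exact: E.
Qed.

Lemma uniform_pos_lb (P : nat -> R -> Prop) :
  (forall c e e', P c e -> e' <= e -> P c e') ->
  (forall c, exists2 e, 0 < e & P c e) ->
  forall C, exists2 e, 0 < e & forall c, (c <= C)%N -> P c e.
Proof.
move=> Pmono Ppos; elim=> [|C [e1 e1p H1]].
  by have [e ep He] := Ppos 0%N; exists e => // c; rewrite leqn0 => /eqP ->.
have [e2 e2p H2] := Ppos C.+1; exists (Order.min e1 e2); first by rewrite lt_min e1p.
move=> c; rewrite leq_eqVlt => /orP [/eqP -> | cC].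
  by apply: Pmono H2 _; rewrite ge_min lexx orbT.
by apply: Pmono (H1 c cC) _; rewrite ge_min lexx.
Qed.

(* Induction on [k]: the summands [dyad c] with [c] below a threshold [C] are
   finitely many and handled by the induction hypothesis at [r - dyad c];
   the others are too small to bring a sum of [k] terms close to [r]. *)
Lemma dyadic_sums_sep k r : @irrationals R r ->
  exists2 e, 0 < e & forall g, dyadic_sums k g -> e <= `|r - g|.
Proof.
elim: k r => [|k IH] r Hr.
  exists `|r|.
    by rewrite normr_gt0; apply/eqP => r0; apply: (Hr 0); rewrite r0 rmorph0.
  by move=> g [s]; rewrite leqn0 => /nilP -> ->; rewrite big_nil subr0.
have [e0 e0p H0] := IH r Hr.
have [C HC] : exists C, dyad C < e0 / 2 by apply: dyad_small; lra.
have [e1 e1p H1] := @uniform_pos_lb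
  (fun c e => forall g, dyadic_sums k g -> e <= `|r - dyad c - g|)
  (fun c e e' He e'e g Gg => le_trans e'e (He g Gg))
  (fun c => IH _ (irrational_subr_dyad (c := c) Hr)) C.
exists (Order.min (e0 / 2) e1); first by rewrite lt_min e1p andbT; lra.
have e_le1 : Order.min (e0 / 2) e1 <= e0 / 2 by rewrite ge_min lexx.
have e_le2 : Order.min (e0 / 2) e1 <= e1 by rewrite ge_min lexx orbT.
move=> g [[|c s] Hs ->].
  rewrite big_nil; apply: le_trans (H0 0 _); first lra.
  by exists [::]; rewrite ?big_nil.
have Gs : dyadic_sums k (\sum_(c0 <- s) dyad c0) by exists s.
rewrite big_cons; have [cC | Cc] := leqP c C.
  by rewrite opprD addrA; apply: le_trans e_le2 (H1 c cC _ Gs).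
have h1 := H0 _ Gs; have h2 : dyad c <= dyad C by apply: dyad_le; exact: ltnW.
have := ler_normD (r - (dyad c + \sum_(c <- s) dyad c)) (dyad c).
have -> : r - (dyad c + \sum_(c <- s) dyad c) + dyad c = r - \sum_(c <- s) dyad c by ring.
rewrite (ger0_norm (ltW (dyad_gt0 c))); lra.
Qed.

End DyadicReals.

Section DyadicExpansion.
Variable R : realType.
Local Open Scope ring_scope.
Import Order.TTheory GRing.Theory Num.Theory.
Local Notation dyad := (@dyad R).

Definition dyad_psum (z : Pw) (j : nat) : R := \sum_(i < j) dyad (dyad_exp z i).

Definition dyad_real (z : Pw) : R := sup (range (dyad_psum z)).

Lemma dyad_psumS z j : dyad_psum z j.+1 = dyad_psum z j + dyad (dyad_exp z j).
Proof. by rewrite /dyad_psum big_ord_recr. Qed.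

Lemma dyad_psum_mono z j n : (j <= n)%N -> dyad_psum z j <= dyad_psum z n.
Proof.
move=> /subnK <-; elim: (n - j)%N => [|d IH]; first by rewrite add0n.
by rewrite addSn dyad_psumS; have := dyad_gt0 R (dyad_exp z (d + j)); lra.
Qed.

Lemma dyad_psum_tail z j n :
  dyad_psum z (j + n) + 2 * dyad (dyad_exp z (j + n))
  <= dyad_psum z j + 2 * dyad (dyad_exp z j).
Proof.
elim: n => [|n IH]; first by rewrite addn0.
have : 2 * dyad (dyad_exp z (j + n).+1) <= dyad (dyad_exp z (j + n)).
  rewrite -(dyadS R (dyad_exp z (j + n))) ler_pM2l ?ltr0n //; apply: dyad_le.
  by have := dyad_exp_step z (j + n); lia.
by rewrite addnS dyad_psumS; lra.
Qed.

Lemma dyad_psum_ub z j n : dyad_psum z n <= dyad_psum z j + 2 * dyad (dyad_exp z j).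
Proof.
have w0 := dyad_gt0 R (dyad_exp z j).
have [jn|nj] := leqP j n; last by have := dyad_psum_mono z (ltnW nj); lra.
have := dyad_psum_tail z j (n - j); rewrite subnKC //.
by have := dyad_gt0 R (dyad_exp z n); lra.
Qed.

Lemma has_sup_dyad_psum z : has_sup (range (dyad_psum z)).
Proof.
split; first by exists (dyad_psum z 0); exists 0%N.
by exists (dyad_psum z 0 + 2 * dyad (dyad_exp z 0)) => _ [n _ <-]; exact: dyad_psum_ub.
Qed.

Lemma dyad_psum_le_real z n : dyad_psum z n <= dyad_real z.
Proof. by apply: sup_upper_bound; [exact: has_sup_dyad_psum | exists n]. Qed.

Lemma dyad_real_le z j : dyad_real z <= dyad_psum z j + 2 * dyad (dyad_exp z j).
Proof.
apply: ge_sup; first by exists (dyad_psum z 0); exists 0%N.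
by move=> _ [n _ <-]; exact: dyad_psum_ub.
Qed.

Lemma dyad_psum_sums z k : @dyadic_sums R k (dyad_psum z k).
Proof.
exists [seq dyad_exp z i | i <- iota 0 k]; first by rewrite size_map size_iota.
rewrite big_map /dyad_psum -(big_mkord xpredT (fun i => dyad (dyad_exp z i))).
by rewrite /index_iota subn0.
Qed.

(* The tail after the [k]-th term is at most [2 * dyad (dyad_exp z k)], which
   [exp_bound] makes at most [1 / N.+1]. *)
Lemma dyad_real_approx z : infinite_pw z -> forall N,
  `|dyad_real z - dyad_psum z (count_below z N)| * N.+1%:R <= 1.
Proof.
move=> iz N; set k := count_below z N; set c := dyad_exp z k.
have h1 := dyad_real_le z k; have h2 := dyad_psum_le_real z k.
have h3 : (2 * N.+1 <= 2 ^ c)%N.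
  apply: leq_trans (exp_boundP iz (leqnn k)) _; rewrite leq_exp2l //.
  exact: dyad_exp_bound.
have h4 : 2 * N.+1%:R <= (2 ^ c)%N%:R :> R by rewrite -natrM ler_nat.
have h5 := exp2_dyadK R c; have w0 := dyad_gt0 R c.
have h6 := ler_wpM2r (ltW w0) h4; rewrite h5 in h6.
rewrite ger0_norm; last lra.
have hN : (0 : R) <= N.+1%:R by [].
nra.
Qed.

(* If [dyad_real z = p / j], then [2 ^ c * j * (dyad_real z - S)] is an
   integer in [(0, 1)], where [S] is the partial sum with [j.+1] terms and
   [c] its last exponent: the tail is smaller than [dyad (c + j.+2)]. *)
Lemma dyad_real_irrational z : @irrationals R (dyad_real z).
Proof.
move=> q E.
have [j dE] : exists j : nat, denq q = j%:Z.
  by case Ed: (denq q) => [j|j]; [exists j | have := denq_gt0 q; rewrite Ed].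
have j0 : (0 < j)%N by have := denq_gt0 q; rewrite dE.
have Eq : dyad_real z * j%:R = (numq q)%:~R.
  have H := congr1 (@ratr R) (numqE q); rewrite ratr_int rmorphM rmorph_int dE in H.
  by rewrite H E.
set c := dyad_exp z j; set c' := dyad_exp z j.+1.
have hc : (c + j.+2 <= c')%N by have := dyad_exp_step z j; rewrite /c /c'; lia.
set t : R := (2 ^ c)%N%:R * j%:R * (dyad_real z - dyad_psum z j.+1).
have p2 : (0 : R) < (2 ^ c)%N%:R by rewrite ltr0n expn_gt0.
have pj : (0 : R) < j%:R by rewrite ltr0n.
have t_gt0 : 0 < t.
  have := dyad_psum_le_real z j.+2; rewrite dyad_psumS -/c' => h.
  have := dyad_gt0 R c'; rewrite /t => w.
  by apply: mulr_gt0; [exact: mulr_gt0 | lra].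
have t_lt1 : t < 1.
  have h1 := dyad_real_le z j.+1; rewrite -/c' in h1.
  have h2 : dyad c' <= dyad c * dyad j.+2 by rewrite -dyadD; apply: dyad_le.
  have h3 := exp2_dyadK R c; have h4 := dyadS R j.+1.
  have h5 : j%:R * dyad j.+1 < 1.
    have h3' := exp2_dyadK R j.+1.
    have : j%:R < (2 ^ j.+1)%N%:R :> R.
      by rewrite ltr_nat; apply: leq_trans (ltn_expl j (ltnSn 1)) _; rewrite leq_exp2l.
    by have := dyad_gt0 R j.+1; nra.
  have wc := dyad_gt0 R c; have wj := dyad_gt0 R j.+2.
  have : t <= (2 ^ c)%N%:R * j%:R * (2 * (dyad c * dyad j.+2)).
    by rewrite /t ler_pM2l ?mulr_gt0 //; lra.
  have -> : (2 ^ c)%N%:R * j%:R * (2 * (dyad c * dyad j.+2)) =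
            ((2 ^ c)%N%:R * dyad c) * (j%:R * (2 * dyad j.+2)) by ring.
  by rewrite h3 h4 mul1r; lra.
pose n : int :=
  ((2 ^ c)%N%:Z * numq q - (j * \sum_(i < j.+1) 2 ^ (c - dyad_exp z i))%N%:Z)%R.
have Et : t = n%:~R.
  have hs : (2 ^ c)%N%:R * dyad_psum z j.+1
           = (\sum_(i < j.+1) 2 ^ (c - dyad_exp z i))%N%:R.
    rewrite /dyad_psum mulr_sumr natr_sum; apply: eq_bigr => i _; apply: exp2_dyad.
    by apply: dyad_exp_mono; have := ltn_ord i; lia.
  by rewrite /n intrB intrM -Eq /t -!pmulrn natrM -hs; ring.
by move: t_gt0 t_lt1; rewrite Et ltr0z ltrz1; lia.
Qed.

Lemma dyad_real_sep_finite (x : Pw) (r : R) : ~ infinite_pt x -> @irrationals R r ->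
  exists N (e : R), 0 < e /\ forall z, infinite_pw z ->
    (forall i, (i < N)%N -> z i = x i) -> e <= `|dyad_real z - r|.
Proof.
move=> Fx Ir; have [n0 Hn0] := finite_setN_ub (contrapT Fx).
set k := count_below x n0.
have [e e0 He] := dyadic_sums_sep k Ir.
set N := maxn n0 (Num.Def.archi_bound (2 / e)).
have hN : 2 < N.+1%:R * e.
  rewrite -ltr_pdivrMr //; apply: lt_le_trans (archi_boundP _) _.
    by apply: divr_ge0 => //; exact: ltW.
  by rewrite ler_nat leqW // leq_maxr.
exists N, (e / 2); split=> [|z iz zx]; first lra.
have kN : count_below z N = k.
  by rewrite (count_below_eq zx) /k; apply: count_below_stable => //; lia.
have h1 := He _ (dyad_psum_sums z k); have h2 := dyad_real_approx iz N.
rewrite kN in h2.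
have h3 : `|r - dyad_psum z k| <= `|dyad_real z - dyad_psum z k| + `|dyad_real z - r|.
  rewrite (distrC (dyad_real z) r).
  have := ler_normD (dyad_real z - dyad_psum z k) (r - dyad_real z).
  suff -> : dyad_real z - dyad_psum z k + (r - dyad_real z) = r - dyad_psum z k by [].
  by ring.
have h4 : 0 <= `|dyad_real z - dyad_psum z k| by [].
have h5 : 0 < N.+1%:R :> R by rewrite ltr0n.
nra.
Qed.

End DyadicExpansion.

Section NonLindelofProduct.
Variable R : realType.
Local Open Scope ring_scope.
Import Order.TTheory GRing.Theory Num.Theory.
Variables (A : set (nat -> nat)) (lt : (nat -> nat) -> (nat -> nat) -> Prop).
Variables (y : (nat -> nat) -> Pw) (T : gamma_tower A lt y).
Local Notation P := (prod_open michael_open (@open R)).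

Definition fiber (a : nat -> nat) : set (Pw * R) := [set w | w.1 = y a].

Lemma fiber_open a : A a -> P (fiber a).
Proof.
move=> Aa w Sw; exists [set y a], setT; split.
  exists set0, [set y a]; rewrite set0U; split=> //; split=> // x ->.
  exact/infinite_pwP/(gt_infinite T).
by split; [exact: openT | split=> //; split=> // w' []].
Qed.

Definition off_graph : set (Pw * R) :=
  [set w : Pw * R | exists U V, [/\ michael_open U, open V, U w.1, V w.2 &
    forall a, A a -> U (y a) -> ~ V (dyad_real R (y a))]].

Lemma off_graph_open : P off_graph.
Proof.
move=> w [U [V [MU oV Uw Vw H]]]; exists U, V; do 4! split=> //.
by move=> w' [Uw' Vw']; exists U, V; split.
Qed.

Lemma off_graph_finite x r : ~ infinite_pt x -> @irrationals R r -> off_graph (x, r).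
Proof.
move=> Fx Ir; have [N [e [e0 He]]] := dyad_real_sep_finite Fx Ir.
exists [set z : Pw | forall i, (i < N)%N -> z i = x i], (ball r e); split=> //.
- exists [set z : Pw | forall i, (i < N)%N -> z i = x i], set0; rewrite setU0.
  split=> // z Hz; exists N => z' Hz' i iN; rewrite Hz' //; exact: Hz.
- exact: ball_open.
- exact: ballxx.
move=> a Aa /(He _ (gt_infinite T Aa)); rewrite -ball_normE /= distrC.
by move=> /le_lt_trans /[apply]; rewrite ltxx.
Qed.

Lemma off_graph_graph a : A a -> ~ off_graph (y a, dyad_real R (y a)).
Proof. by move=> Aa [U [V [_ _ Uy Vy H]]]; exact: H Aa Uy Vy. Qed.

(* The graph points are covered only by their own fibers, so a subcover
   contains uncountably many fibers. *)
Lemma tower_space_irrationals_not_lindelof :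
  ~ lindelof P (tower_space A y `*` @irrationals R).
Proof.
move=> L; pose Cov := [set off_graph] `|` fiber @` A.
have oCov S : Cov S -> P S.
  by move=> [-> | [a Aa <-]]; [exact: off_graph_open | exact: fiber_open].
have Cov_cover : tower_space A y `*` @irrationals R `<=` \bigcup_(S in Cov) S.
  move=> [x r] [/= [Fx | [a Aa <-]] Ir].
    by exists off_graph; [left | exact: off_graph_finite].
  by exists (fiber a); [right; exists a | ].
have [D DC [cD DCov]] := L Cov oCov Cov_cover.
have Dfiber a : A a -> D (fiber a).
  move=> Aa; have [|S DS Sw] := DCov (y a, dyad_real R (y a)).
    by split; [right; exists a | exact: dyad_real_irrational].
  case: (DC S DS) => [E | [a' Aa' E]].
    by rewrite E in Sw; case: (off_graph_graph Aa).
  by rewrite -E in DS Sw *; rewrite /fiber /= in Sw; rewrite (gt_inj T Aa Aa' Sw).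
apply: (gt_uncountable T); move/countable_injP: cD => [f finj]; apply/countable_injP.
exists (fun a => f (fiber a)) => a b /set_mem Aa /set_mem Ab E.
have E2 : fiber a = fiber b by apply: finj => //; apply/mem_set; exact: Dfiber.
have : fiber b (y a, 0) by rewrite -E2.
by rewrite /fiber /= => /(gt_inj T Aa Ab).
Qed.

End NonLindelofProduct.

Theorem theorem4p6 (R : realType) :
  b_eq_aleph1 ->
  exists X : set Pw,
    gamma_space michael_open X /\
    lindelof michael_open X /\
    ~ lindelof (prod_open michael_open (@open R)) (X `*` @irrationals R).
Proof.
move=> b1; have [A [lt [y T]]] := gamma_tower_exists b1.
exists (tower_space A y); split; first exact: tower_space_gamma T.
split; first exact: tower_space_lindelof T.
exact: tower_space_irrationals_not_lindelof T.
Qed.
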